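(* Let $d,k\ge 1$ be integers. Define $C_{d,k}$ as follows. If $d$ is odd, write $k=(d+1)q/2+r$ with integers $q\ge 0$ and $1\le r\le (d+1)/2$, and set $$C_{d,k}=(q+1)\left(1+\frac{r-1}{(d+1)(q+2)/2-(r-1)}\right).$$ If $d$ is even, write $k=(d+1)q+r$ with integers $q\ge 0$ and $1\le r\le d+1$, and set $$C_{d,k}=\begin{cases}(2q+1)\left(1+\dfrac{r-1}{(d+1)(q+1)-(r-1)}\right) & \text{if } 1\le r\le d/2+1,\\[2mm] (2q+3)\left(1-\dfrac{d+2-r}{(d+1)(q+1)+(d+2-r)}\right) & \text{otherwise.}\end{cases}$$ Then there is a constant $K_{d,k}$ depending only on $d$ and $k$ such that $f(n,d,k)\le C_{d,k}\,n+K_{d,k}$ for all integers $n\ge 1$.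
   Context: For integers $d\ge 1$, $n\ge 1$, $T_d(n)=\{(x_1,\dots,x_d)\in\mathbb{Z}_{\ge 0}^d : x_1+\dots+x_d\le n-1\}$. A $k$-cover of $T_d(n)$ is a finite multiset of affine hyperplanes in $\mathbb{R}^d$ such that every point of $T_d(n)$ lies in at least $k$ of them (with multiplicity). $f(n,d,k)$ is the minimum cardinality of a $k$-cover of $T_d(n)$. *)

From HB Require Import structures.
From mathcomp Require Import all_boot all_order all_algebra.
From mathcomp Require Import boolp reals.
Set Implicit Arguments. Unset Strict Implicit. Unset Printing Implicit Defensive.
Import Order.TTheory GRing.Theory Num.Theory.
Local Open Scope ring_scope.

(* An affine hyperplane of R^d is encoded by (a, b) with a <> 0; it is the set
   { x in R^d | sum_i a_i x_i = b }. *)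
Definition hyperplane (R : realType) (d : nat) := ({ffun 'I_d -> R} * R)%type.

Definition is_hyperplane (R : realType) (d : nat) (h : hyperplane R d) : bool :=
  h.1 != 0.

Definition on_hyp (R : realType) (d : nat) (h : hyperplane R d) (x : 'I_d -> nat) : bool :=
  \sum_(i < d) h.1 i * (x i)%:R == h.2.

Definition in_T (d n : nat) (x : 'I_d -> nat) : Prop :=
  (\sum_(i < d) x i <= n - 1)%N.

(* a finite multiset of affine hyperplanes is a list; cardinality = size *)
Definition is_kcover (R : realType) (n d k : nat) (H : seq (hyperplane R d)) : Prop :=
  all (@is_hyperplane R d) H /\
  forall x : 'I_d -> nat, @in_T d n x -> (k <= count (fun h => on_hyp h x) H)%N.

Definition has_kcover_of_size (R : realType) (n d k m : nat) : Prop :=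
  exists H : seq (hyperplane R d), size H = m /\ @is_kcover R n d k H.

(* f(n,d,k): minimum cardinality of a k-cover of T_d(n) (0 if none exists,
   which never happens for d >= 1). *)
Definition f (R : realType) (n d k : nat) : nat :=
  match pselect (exists m, has_kcover_of_size R n d k m) with
  | left ex => ex_minn (P := fun m => `[< has_kcover_of_size R n d k m >])
                 (let: ex_intro m Hm := ex in ex_intro _ m (asboolT Hm))
  | right _ => 0%N
  end.

(* The constant C_{d,k}. For d odd, m = (d+1)/2 and k = m q + r with 1 <= r <= m,
   i.e. q = (k-1) %/ m, r = (k-1) %% m + 1. For d even, likewise with m = d+1. *)
Definition C (R : realType) (d k : nat) : R :=
  if odd d then
    let m := (d.+1 %/ 2)%N in
    let q := ((k - 1) %/ m)%N in
    let r := ((k - 1) %% m).+1 in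
    (q.+1)%:R * (1 + (r - 1)%:R / (((d.+1 * (q + 2)) %/ 2)%:R - (r - 1)%:R))
  else
    let m := d.+1 in
    let q := ((k - 1) %/ m)%N in
    let r := ((k - 1) %% m).+1 in
    if (r <= d %/ 2 + 1)%N then
      (2 * q + 1)%:R * (1 + (r - 1)%:R / ((d.+1 * q.+1)%:R - (r - 1)%:R))
    else
      (2 * q + 3)%:R * (1 - (d + 2 - r)%:R / ((d.+1 * q.+1)%:R + (d + 2 - r)%:R)).

From HB Require Import structures.
From mathcomp Require Import all_boot all_order all_algebra.
From mathcomp Require Import boolp reals.
From mathcomp Require Import zify ring.
Import Order.TTheory GRing.Theory Num.Theory.
Local Open Scope ring_scope.

(* A point x of T_d(n) has d+1 "barycentric" coordinates
   y_0 = n-1-(x_1+...+x_d), y_i = x_i, which are nonnegative and sum to n-1;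
   each level set {y_j = c} is an affine hyperplane.  Fix integers A, B > 0
   and take, for every coordinate j and every layer i < A, the hyperplanes
   {y_j = c} for all c < n with B c < (i+1) n.  A point is then covered at
   least  sum_j (A - floor(B y_j / n)) >= (d+1) A - (B-1)  times, so the
   family is a k-cover as soon as B + k <= (d+1) A + 1, and its size is at
   most (d+1) A (A+1) n / (2B) + (d+1) A. *)

Section LayeredCover.
Variables (R : realType) (d n A B : nat).

Definition bary (x : 'I_d -> nat) (j : 'I_d.+1) : nat :=
  match unlift ord0 j with
  | Some i => x i
  | None => (n - 1 - \sum_(i < d) x i)%N
  end.

Definition bary_hyp (j : 'I_d.+1) (c : nat) : hyperplane R d :=
  match unlift ord0 j with
  | Some i => ([ffun l => (l == i)%:R], c%:R)
  | None => ([ffun _ => 1], (n - 1 - c)%:R)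
  end.

Lemma on_bary_hyp x j : in_T n x -> on_hyp (bary_hyp j (bary x j)) x.
Proof.
rewrite /in_T /on_hyp /bary_hyp /bary => hx.
case: (unlift ord0 j) => [i|] /=.
  rewrite (bigD1 i) //= ffunE eqxx mul1r big1 ?addr0 //.
  by move=> l /negbTE hl; rewrite ffunE hl mul0r.
under eq_bigr do rewrite ffunE mul1r.
by rewrite -natr_sum subKn.
Qed.

Lemma bary_hyp_nondeg j c : (0 < d)%N -> is_hyperplane (bary_hyp j c).
Proof.
move=> d0; rewrite /is_hyperplane /bary_hyp.
case: (unlift ord0 j) => [i|] /=; apply/eqP => /ffunP.
  by move=> /(_ i); rewrite !ffunE eqxx => /eqP; rewrite oner_eq0.
by move=> /(_ (Ordinal d0)); rewrite !ffunE => /eqP; rewrite oner_eq0.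
Qed.

Lemma bary_lt x j : in_T n x -> (0 < n)%N -> (bary x j < n)%N.
Proof.
rewrite /in_T /bary => hx n0; case: (unlift ord0 j) => [i|]; last lia.
by move: hx; rewrite (bigD1 i) //=; lia.
Qed.

Lemma sum_bary x : in_T n x -> (\sum_(j < d.+1) bary x j = n - 1)%N.
Proof.
rewrite /in_T => hx; rewrite big_ord_recl.
under eq_bigr do rewrite /bary liftK.
by rewrite /bary unlift_none subnK.
Qed.

Definition layer (j : 'I_d.+1) (i : nat) : seq (hyperplane R d) :=
  [seq bary_hyp j c | c <- [seq c <- index_iota 0 n | (B * c < i.+1 * n)%N]].

Definition layered_cover : seq (hyperplane R d) :=
  flatten [seq flatten [seq layer j i | i <- index_iota 0 A]
          | j <- index_enum 'I_d.+1].

Lemma count_layer x j i : in_T n x -> (0 < n)%N ->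
  ((B * bary x j < i.+1 * n)%N <= count (fun h => on_hyp h x) (layer j i))%N.
Proof.
move=> hx n0; case hB: (B * bary x j < i.+1 * n)%N => //.
rewrite -has_count; apply/hasP; exists (bary_hyp j (bary x j)).
  apply/mapP; exists (bary x j) => //.
  by rewrite mem_filter hB mem_index_iota /= bary_lt.
exact: on_bary_hyp.
Qed.

Lemma count_layered_cover x : in_T n x -> (0 < n)%N ->
  (\sum_(j < d.+1) \sum_(i < A) (B * bary x j < i.+1 * n)%N <=
   count (fun h => on_hyp h x) layered_cover)%N.
Proof.
move=> hx n0; rewrite count_flatten sumnE !big_map.
apply: leq_sum => j _; rewrite count_flatten sumnE !big_map big_mkord.
by apply: leq_sum => i _; apply: count_layer.
Qed.

Lemma size_layered_cover : size layered_cover =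
  (d.+1 * \sum_(i < A) count (fun c => B * c < i.+1 * n)%N (index_iota 0 n))%N.
Proof.
rewrite size_flatten /shape -map_comp sumnE big_map.
rewrite (eq_bigr (fun _ => \sum_(i < A)
           count (fun c => B * c < i.+1 * n)%N (index_iota 0 n))%N).
  by rewrite big_const_ord iter_addn_0 mulnC.
move=> j _ /=; rewrite size_flatten /shape -map_comp sumnE big_map big_mkord.
by apply: eq_bigr => i _ /=; rewrite /layer size_map size_filter.
Qed.

End LayeredCover.

Lemma layers_hit (n A B y : nat) : (0 < n)%N ->
  (A - B * y %/ n <= \sum_(i < A) (B * y < i.+1 * n)%N)%N.
Proof.
move=> n0; elim: A => [|a IH]; first by rewrite big_ord0.
rewrite big_ord_recr /=; case: (leqP (B * y %/ n) a) => h; last lia.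
have -> : (B * y < a.+1 * n)%N by rewrite -ltn_divLR.
by move: IH => /=; lia.
Qed.

Lemma sum_divn_le (I : finType) (a : I -> nat) (n : nat) : (0 < n)%N ->
  (\sum_(j : I) (a j %/ n) <= (\sum_(j : I) a j) %/ n)%N.
Proof.
move=> n0; elim/big_rec2: _ => // j s t _ IH.
rewrite leq_divRL // mulnDl (leq_add (leq_divM _ _)) //.
by rewrite -leq_divRL.
Qed.

Lemma layered_cover_is_kcover (R : realType) {d n A B k : nat} :
  (0 < d)%N -> (0 < n)%N -> (0 < B)%N -> (B + k <= d.+1 * A + 1)%N ->
  is_kcover n k (layered_cover R d n A B).
Proof.
move=> d0 n0 B0 hk; split.
  apply/allP => h /flattenP [s /mapP [j _ ->]] /flattenP [s' /mapP [i _ ->]].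
  by move=> /mapP [c _ ->]; apply: bary_hyp_nondeg.
move=> x hx; apply: leq_trans _ (count_layered_cover R d n A B x hx n0).
have hit : (\sum_(j < d.+1) (A - B * bary d n x j %/ n) <=
            \sum_(j < d.+1) \sum_(i < A) (B * bary d n x j < i.+1 * n)%N)%N.
  by apply: leq_sum => j _; apply: layers_hit.
apply: leq_trans hit.
have floors : (\sum_(j < d.+1) (B * bary d n x j %/ n) < B)%N.
  apply: leq_ltn_trans (sum_divn_le _ (fun j => B * bary d n x j)%N n n0) _.
  by rewrite -big_distrr /= sum_bary // ltn_divLR //; nia.
have split_A : (d.+1 * A <= \sum_(j < d.+1) (A - B * bary d n x j %/ n)
                            + \sum_(j < d.+1) (B * bary d n x j %/ n))%N.
  rewrite -big_split /= -[X in (X <= _)%N]mulnC -iter_addn_0 -big_const_ord.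
  by apply: leq_sum => j _; lia.
lia.
Qed.

Lemma count_small_multiples (n M : nat) {B : nat} : (0 < B)%N ->
  (count (fun c => B * c < M)%N (index_iota 0 n) <= (M + B - 1) %/ B)%N.
Proof.
move=> B0; rewrite -size_filter -[X in (_ <= X)%N](size_iota 0).
apply: uniq_leq_size; first by rewrite filter_uniq // iota_uniq.
move=> c; rewrite mem_filter mem_iota /= => /andP[hc _].
by rewrite add0n leq_divRL //; lia.
Qed.

Lemma layer_sizes_bound (n A : nat) {B : nat} : (0 < B)%N ->
  (2 * (B * \sum_(i < A) count (fun c => B * c < i.+1 * n)%N (index_iota 0 n))
   <= n * A * A.+1 + 2 * A * B)%N.
Proof.
move=> B0; elim: A => [|a IH]; first by rewrite big_ord0; lia.
rewrite big_ord_recr /=.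
have := count_small_multiples n (a.+1 * n) B0.
set t := count _ _ => ht.
have : (t * B <= a.+1 * n + B - 1)%N.
  by apply: leq_trans (leq_mul ht (leqnn B)) _; rewrite leq_divM.
by move: IH; set S := (\sum_(i < a) _)%N; nia.
Qed.

Lemma f_le_kcover {R : realType} {n d k : nat} {H : seq (hyperplane R d)} :
  is_kcover n k H -> (f R n d k <= size H)%N.
Proof.
move=> hH; rewrite /f; case: pselect => [ex|[]]; last by exists (size H), H.
by case: ex_minnP => m _; apply; apply/asboolP; exists H.
Qed.

Definition layered_slope (R : realType) (d A B : nat) : R :=
  (d.+1 * A * A.+1)%:R / (2 * B)%:R.

Lemma f_le_layered_slope (R : realType) (d k A B : nat) :
  (0 < d)%N -> (0 < B)%N -> (B + k <= d.+1 * A + 1)%N -> forall n, (0 < n)%N ->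
  (f R n d k)%:R <= layered_slope R d A B * n%:R + (d.+1 * A)%:R.
Proof.
move=> d0 B0 hk n n0.
have := f_le_kcover (layered_cover_is_kcover R d0 n0 B0 hk).
rewrite size_layered_cover => hf.
have := layer_sizes_bound n A B0.
set S := (\sum_(i < A) _)%N in hf * => hS.
apply: le_trans (_ : (d.+1 * S)%:R <= _); first by rewrite ler_nat.
have -> : layered_slope R d A B * n%:R + (d.+1 * A)%:R
   = (d.+1 * (n * A * A.+1 + 2 * A * B))%:R / (2 * B)%:R :> R.
  rewrite /layered_slope !natrM !natrD !natrM; field.
  by rewrite pnatr_eq0 -lt0n.
rewrite ler_pdivlMr ?ltr0n ?muln_gt0 ?B0 // -natrM ler_nat.
nia.
Qed.

Definition admissible (d k A B : nat) : Prop :=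
  (0 < B)%N /\ (B + k <= d.+1 * A + 1)%N.

Lemma C_odd (R : realType) (d k : nat) : odd d ->
  exists A B, admissible d k A B /\ C R d k = layered_slope R d A B.
Proof.
move=> hodd; rewrite /C hodd /layered_slope.
set m := (d.+1 %/ 2)%N.
have hm : d.+1 = (m * 2)%N by rewrite divnK // dvdn2 /= hodd.
set q := ((k - 1) %/ m)%N; set r := ((k - 1) %% m)%N.
have hr : (r < m)%N by rewrite ltn_pmod //; lia.
have hkq : (k - 1 = q * m + r)%N by rewrite /q /r -divn_eq.
exists q.+1, (m * (q + 2) - r)%N; split; first by split; nia.
have hX : (r <= m * (q + 2))%N by nia.
have hne : ((m * (q + 2))%:R - r%:R != 0 :> R) by rewrite -natrB // pnatr_eq0; lia.
rewrite subSS subn0 hm [(m * 2)%N]mulnC -!mulnA mulKn //.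
rewrite [(2 * (m * (q + 2) - r))%:R]natrM natrB // -[q.+2]addn2 -[q.+1]addn1.
move: hne; rewrite !natrM !natrD => hne.
by clearbody q r m; field.
Qed.

Lemma C_even_low (R : realType) (d k : nat) : ~~ odd d ->
  (((k - 1) %% d.+1).+1 <= d %/ 2 + 1)%N ->
  exists A B, admissible d k A B /\ C R d k = layered_slope R d A B.
Proof.
move=> heven; rewrite /C (negbTE heven) /layered_slope => hc; rewrite hc.
set q := ((k - 1) %/ d.+1)%N in hc *; set r := ((k - 1) %% d.+1)%N in hc *.
have hr : (r < d.+1)%N by rewrite ltn_pmod.
have hkq : (k - 1 = q * d.+1 + r)%N by rewrite /q /r -divn_eq.
exists (2 * q + 1)%N, (d.+1 * q.+1 - r)%N; split; first by split; nia.
have hX : (r <= d.+1 * q.+1)%N by nia.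
have hne : ((d.+1 * q.+1)%:R - r%:R != 0 :> R) by rewrite -natrB // pnatr_eq0; lia.
rewrite subSS subn0 [(2 * (d.+1 * q.+1 - r))%:R]natrM natrB //.
rewrite -[(2 * q + 1).+1]addn1 -[q.+1]addn1.
move: hne; rewrite -[q.+1]addn1 !natrM !natrD => hne.
by set D := d.+1 in hne *; clearbody q r D; field.
Qed.

Lemma C_even_high (R : realType) (d k : nat) : ~~ odd d ->
  ~~ (((k - 1) %% d.+1).+1 <= d %/ 2 + 1)%N ->
  exists A B, admissible d k A B /\ C R d k = layered_slope R d A B.
Proof.
move=> heven; rewrite /C (negbTE heven) /layered_slope => /negbTE hc; rewrite hc.
set q := ((k - 1) %/ d.+1)%N; set r := ((k - 1) %% d.+1)%N.
have hr : (r < d.+1)%N by rewrite ltn_pmod.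
have hkq : (k - 1 = q * d.+1 + r)%N by rewrite /q /r -divn_eq.
set E := (d + 2 - r.+1)%N.
exists (2 * q + 2)%N, (d.+1 * q.+1 + E)%N; split; first by split; rewrite /E; nia.
have hne : ((d.+1 * q.+1)%:R + E%:R != 0 :> R) by rewrite -natrD pnatr_eq0; lia.
rewrite [(2 * (d.+1 * q.+1 + E))%:R]natrM natrD.
move: hne; set D := d.+1; clearbody q r E D => hne.
rewrite -[(2 * q + 2).+1]addn1.
move: hne; rewrite -[q.+1]addn1 !natrM !natrD => hne.
by field.
Qed.

Theorem mainTheorem10 (R : realType) (d k : nat) :
  (1 <= d)%N -> (1 <= k)%N ->
  exists K : R, forall n : nat, (1 <= n)%N ->
    (f R n d k)%:R <= C R d k * n%:R + K.
Proof.
move=> d1 _.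
have [A [B [[B0 hk] ->]]] : exists A B,
    admissible d k A B /\ C R d k = layered_slope R d A B.
  have [hodd|heven] := boolP (odd d); first exact: C_odd.
  have [hc|hc] := boolP (((k - 1) %% d.+1).+1 <= d %/ 2 + 1)%N.
    exact: C_even_low.
  exact: C_even_high.
by exists (d.+1 * A)%:R; apply: f_le_layered_slope.
Qed.
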